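(* Let $\mathcal H$ be a separable complex Hilbert space, $A_1,A_2\in L(\mathcal H)^+$, $B\in L(\mathcal H)$ with closed range, and $G\in L(\mathcal H)$. Then $G$ is an $A_1A_2$-inverse of $B$ if and only if (1) $B^*A_1BG=B^*A_1$ and (2) $R(A_2G)\subseteq N(A_1B)^\perp$.
   Context: $\|z\|_{A}=\langle Az,z\rangle^{1/2}$ for $A\in L(\mathcal H)^+$. For $y\in\mathcal H$, $x_0$ is an $A_1$-least squares solution ($A_1$-LSS) of $Bx=y$ if $\|y-Bx_0\|_{A_1}\le\|y-Bx\|_{A_1}$ for all $x\in\mathcal H$. $G$ is an $A_1$-inverse of $B$ if $Gy$ is an $A_1$-LSS of $Bx=y$ for every $y$. $G$ is an $A_1A_2$-inverse of $B$ if $G$ is an $A_1$-inverse of $B$ and, for each $y\in\mathcal H$, $\|Gy\|_{A_2}\le\|x_0\|_{A_2}$ for every $A_1$-LSS $x_0$ of $Bx=y$. $N(\cdot)$ denotes nullspace. *)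

(* complex scalars R[i] (mathcomp-real-closed) over a
   realType R, i.e. the field of complex numbers. *)
From HB Require Import structures.
From mathcomp Require Import all_boot all_order all_algebra.
From mathcomp Require Import complex reals.
Set Implicit Arguments.
Unset Strict Implicit.
Unset Printing Implicit Defensive.
Import Order.TTheory GRing.Theory Num.Theory.
Local Open Scope ring_scope.

Section Hilbert.
Variables (R : realType) (H : lmodType R[i]).

Definition is_inner_product (ip : H -> H -> R[i]) : Prop :=
  [/\ (forall (a : R[i]) (x y z : H), ip (a *: x + y) z = a * ip x z + ip y z),
      (forall x y : H, ip x y = Num.conj (ip y x)),
      (forall x : H, 0 <= ip x x) &
      (forall x : H, ip x x = 0 -> x = 0)].

Definition ipnorm (ip : H -> H -> R[i]) (x : H) : R[i] := sqrtC (ip x x).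

Definition cvg_to (ip : H -> H -> R[i]) (u : nat -> H) (l : H) : Prop :=
  forall eps : R[i], 0 < eps ->
    exists N : nat, forall n, (N <= n)%N -> ipnorm ip (u n - l) < eps.

Definition cauchy_seq (ip : H -> H -> R[i]) (u : nat -> H) : Prop :=
  forall eps : R[i], 0 < eps ->
    exists N : nat, forall m n, (N <= m)%N -> (N <= n)%N ->
      ipnorm ip (u m - u n) < eps.

Definition complete_ip (ip : H -> H -> R[i]) : Prop :=
  forall u, cauchy_seq ip u -> exists l, cvg_to ip u l.

Definition separable_ip (ip : H -> H -> R[i]) : Prop :=
  exists d : nat -> H, forall (x : H) (eps : R[i]), 0 < eps ->
    exists n, ipnorm ip (x - d n) < eps.

Definition separable_hilbert (ip : H -> H -> R[i]) : Prop :=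
  [/\ is_inner_product ip, complete_ip ip & separable_ip ip].

Definition bounded_op (ip : H -> H -> R[i]) (T : {linear H -> H}) : Prop :=
  exists M : R[i], forall x, ipnorm ip (T x) <= M * ipnorm ip x.

Definition positive_op (ip : H -> H -> R[i]) (T : {linear H -> H}) : Prop :=
  bounded_op ip T /\ forall x, 0 <= ip (T x) x.

Definition is_adjoint (ip : H -> H -> R[i]) (T Ts : {linear H -> H}) : Prop :=
  forall x y, ip (T x) y = ip x (Ts y).

Definition closed_range (ip : H -> H -> R[i]) (T : {linear H -> H}) : Prop :=
  forall (u : nat -> H) (y : H), cvg_to ip (fun n => T (u n)) y ->
    exists x, T x = y.

Definition Anorm (ip : H -> H -> R[i]) (A : {linear H -> H}) (z : H) : R[i] :=
  sqrtC (ip (A z) z).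

Definition A_LSS (ip : H -> H -> R[i]) (A1 B : {linear H -> H}) (y x0 : H) : Prop :=
  forall x, Anorm ip A1 (y - B x0) <= Anorm ip A1 (y - B x).

Definition A_inverse (ip : H -> H -> R[i]) (A1 B G : {linear H -> H}) : Prop :=
  forall y, A_LSS ip A1 B y (G y).

Definition AA_inverse (ip : H -> H -> R[i]) (A1 A2 B G : {linear H -> H}) : Prop :=
  A_inverse ip A1 B G /\
  forall y x0, A_LSS ip A1 B y x0 -> Anorm ip A2 (G y) <= Anorm ip A2 x0.

End Hilbert.

From HB Require Import structures.
From mathcomp Require Import all_boot all_order all_algebra.
From mathcomp Require Import complex reals.
From mathcomp Require Import ring.
Import Order.TTheory GRing.Theory Num.Theory.
Local Open Scope ring_scope.
Set Implicit Arguments.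
Unset Strict Implicit.

(* For a positive operator A the
   form Q x = <A x, x> is a nonnegative Hermitian quadratic form, so u
   minimises Q on u + span v iff <A v, u> = 0.  Applied to A1 and the affine
   family y - B x, this shows that x0 is an A1-LSS of B x = y iff
   B^* A1 B x0 = B^* A1 y; hence, once (1) holds, the A1-LSS of B x = y are
   exactly G y + N(A1 B), and applied to A2 on this affine set, G y has minimal
   A2-seminorm iff A2 G y is orthogonal to N(A1 B). *)

Lemma quadratic_ge0_eq0 (R : realType) (c q : R[i]) : 0 <= q ->
  (forall t, 0 <= t * c + (t * c)^* + t * t^* * q) -> c = 0.
Proof.
move=> q_ge0 quad_ge0; set s := (q + 1)^-1; set n := c * c^*.
have s_gt0 : 0 < s by rewrite invr_gt0 ltr_wpDl.
have s_real : s^* = s by apply/conj_Creal/ger0_real/ltW.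
have ns_ge0 : 0 <= n * s by rewrite mulr_ge0 ?mul_conjC_ge0 ?ltW.
have ns_real : (- (n * s))^* = - (n * s).
  by apply: conj_Creal; rewrite rpredN ger0_real.
(* the choice t = - c^* / (q + 1) makes the quadratic n s (s q - 2) *)
have := quad_ge0 (- (c^* * s)).
have -> : - (c^* * s) * c = - (n * s) by rewrite /n; ring.
rewrite ns_real rmorphN rmorphM /= conjCK s_real.
have -> : - (n * s) + - (n * s) + - (c^* * s) * - (c * s) * q
   = (n * s) * (s * q - 2) by rewrite /n; ring.
have sq_lt0 : s * q - 2 < 0.
  rewrite subr_lt0 (@le_lt_trans _ _ 1) ?ltr1n //.
  by rewrite mulrC ler_pdivrMr ?ltr_wpDl // mul1r lerDl.
have [ns0 _ | ns_neq0] := eqVneq (n * s) 0.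
  move/eqP: ns0; rewrite mulf_eq0 (gt_eqF s_gt0) orbF.
  by rewrite /n mul_conjC_eq0 => /eqP.
rewrite pmulr_rge0 ?lt0r ?ns_neq0 // => /(lt_le_trans sq_lt0).
by rewrite ltxx.
Qed.

Section InnerProduct.
Variables (R : realType) (H : lmodType R[i]) (ip : H -> H -> R[i]).
Hypothesis ipP : is_inner_product ip.

Lemma ip_conj x y : ip x y = (ip y x)^*.
Proof. by case: ipP => _ ->. Qed.

Lemma ip_eq0 x : ip x x = 0 -> x = 0.
Proof. by case: ipP => _ _ _; apply. Qed.

Lemma ipDZl a x y z : ip (a *: x + y) z = a * ip x z + ip y z.
Proof. by case: ipP => ->. Qed.

Lemma ip0l z : ip 0 z = 0.
Proof.
have := ipDZl 1 0 0 z; rewrite scaler0 addr0 mul1r => /eqP.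
by rewrite -subr_eq addrN eq_sym => /eqP.
Qed.

Lemma ipDl x y z : ip (x + y) z = ip x z + ip y z.
Proof. by rewrite -[x]scale1r ipDZl mul1r scale1r. Qed.

Lemma ipZl a x z : ip (a *: x) z = a * ip x z.
Proof. by rewrite -[a *: x]addr0 ipDZl ip0l addr0. Qed.

Lemma ip0r z : ip z 0 = 0.
Proof. by rewrite ip_conj ip0l conjC0. Qed.

Lemma ipDr x y z : ip z (x + y) = ip z x + ip z y.
Proof. by rewrite ip_conj ipDl rmorphD [ip z x]ip_conj [ip z y]ip_conj. Qed.

Lemma ipZr a x z : ip z (a *: x) = a^* * ip z x.
Proof. by rewrite ip_conj ipZl rmorphM [ip z x]ip_conj. Qed.

Section PositiveForm.
Variable A : {linear H -> H}.
Hypothesis A_ge0 : forall x, 0 <= ip (A x) x.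

Lemma pos_form_real x : (ip (A x) x)^* = ip (A x) x.
Proof. exact/conj_Creal/ger0_real. Qed.

Lemma pos_selfadjoint x y : ip (A x) y = ip x (A y).
Proof.
have polar z w : ip (A z) w + ip (A w) z
    = ip (A (z + w)) (z + w) - ip (A z) z - ip (A w) w.
  by rewrite linearD ipDl !ipDr; ring.
have polar_real z w : (ip (A z) w + ip (A w) z)^* = ip (A z) w + ip (A w) z.
  by rewrite polar !rmorphB /= !pos_form_real.
rewrite [RHS]ip_conj; set a := ip (A x) y; set b := ip (A y) x.
have re : a^* + b^* = a + b by have := polar_real x y; rewrite rmorphD.
have im : 'i * a^* - 'i * b^* = - 'i * a + 'i * b.
  have := polar_real x ('i *: y); rewrite linearZ ipZl ipZr conjCi /=.
  by rewrite !(rmorphD, rmorphM, rmorphN) /= conjCi opprK mulNr.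
have ii : 'i * 'i + 1 = 0 :> R[i] by rewrite -expr2 sqrCi addNr.
(* both real-valued polarizations combine into 2 (a - b^* ) = 0 *)
have : 2 * (a - b^*) = (a + b - (a^* + b^*))
    - 'i * ('i * a^* - 'i * b^* - (- 'i * a + 'i * b))
    + ('i * 'i + 1) * (a^* - b^* + a - b) by ring.
rewrite re im ii !subrr mulr0 mul0r addr0 subr0 => /eqP.
by rewrite mulf_eq0 pnatr_eq0 orFb subr_eq0 => /eqP.
Qed.

Lemma pos_formD u v : ip (A (u + v)) (u + v)
  = ip (A u) u + ip (A v) u + (ip (A v) u)^* + ip (A v) v.
Proof.
by rewrite linearD ipDl !ipDr [ip (A u) v]pos_selfadjoint -ip_conj; ring.
Qed.

Lemma pos_form_min_orth u v :
  (forall t, ip (A u) u <= ip (A (u + t *: v)) (u + t *: v)) -> ip (A v) u = 0.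
Proof.
move=> u_min; apply: (quadratic_ge0_eq0 (A_ge0 v)) => t.
have := u_min t; rewrite pos_formD linearZ /= !ipZl ipZr.
by rewrite -!addrA lerDl !addrA mulrA.
Qed.

Lemma pos_orth_form_min u v : ip (A v) u = 0 ->
  ip (A u) u <= ip (A (u + v)) (u + v).
Proof. by move=> Avu0; rewrite pos_formD Avu0 conjC0 !addr0 lerDl. Qed.

Lemma pos_form_eq0 z : ip (A z) z = 0 -> A z = 0.
Proof.
move=> Az0; apply: ip_eq0; rewrite -pos_selfadjoint.
by apply: pos_form_min_orth => t; rewrite Az0.
Qed.

Lemma Anorm_le u v : Anorm ip A u <= Anorm ip A v <-> ip (A u) u <= ip (A v) v.
Proof. by rewrite /Anorm ler_sqrtC // nnegrE. Qed.

End PositiveForm.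

Lemma A_LSS_normal_eq (A1 B Bs : {linear H -> H}) :
  (forall x, 0 <= ip (A1 x) x) -> is_adjoint ip B Bs -> forall y x0,
  A_LSS ip A1 B y x0 <-> Bs (A1 (B x0)) = Bs (A1 y).
Proof.
move=> A1_ge0 BsP y x0; split=> [x0_LSS | normal x].
- suff /ip_eq0 : ip (Bs (A1 (y - B x0))) (Bs (A1 (y - B x0))) = 0.
    by rewrite !linearB /= => /eqP; rewrite subr_eq0 => /eqP.
  rewrite -BsP -pos_selfadjoint //; apply: pos_form_min_orth => // t.
  set h := Bs (A1 (y - B x0)).
  have -> : y - B x0 + t *: B h = y - B (x0 - t *: h).
    by rewrite linearB linearZ /= opprB addrA addrAC.
  by rewrite -Anorm_le.
- have -> : y - B x = y - B x0 + B (x0 - x) by rewrite linearB /= addrA subrK.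
  rewrite Anorm_le //; apply: pos_orth_form_min => //.
  by rewrite pos_selfadjoint // BsP !linearB /= normal subrr ip0r.
Qed.

End InnerProduct.

Theorem mainTheorem16 (R : realType) (H : lmodType R[i]) (ip : H -> H -> R[i])
  (A1 A2 B Bs G : {linear H -> H}) :
  separable_hilbert ip ->
  positive_op ip A1 -> positive_op ip A2 ->
  bounded_op ip B -> closed_range ip B ->
  is_adjoint ip B Bs ->
  bounded_op ip G ->
  (AA_inverse ip A1 A2 B G <->
   ((forall x, Bs (A1 (B (G x)))  = Bs (A1 x)) /\
    (forall x z, A1 (B z) = 0 -> ip (A2 (G x)) z = 0))).
Proof.
move=> [ipP _ _] [_ A1_ge0] [_ A2_ge0] _ _ BsP _.
have LSSE := A_LSS_normal_eq ipP A1_ge0 BsP.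
split=> [[G_LSS G_min] | [normal orth]].
- have normal x : Bs (A1 (B (G x))) = Bs (A1 x) by apply/LSSE/G_LSS.
  split=> // x z A1Bz0.
  rewrite (pos_selfadjoint ipP A2_ge0) (ip_conj ipP).
  suff -> : ip (A2 z) (G x) = 0 by rewrite conjC0.
  apply: pos_form_min_orth => // t; rewrite -Anorm_le //; apply: G_min.
  by apply/LSSE; rewrite !linearD !linearZ /= A1Bz0 linear0 scaler0 addr0.
- split=> [y | y x0 /LSSE x0_normal]; first exact/LSSE.
  have A1B_eq0 : A1 (B (x0 - G y)) = 0.
    apply: (pos_form_eq0 ipP A1_ge0).
    rewrite (pos_selfadjoint ipP A1_ge0) BsP !linearB /=.
    by rewrite x0_normal normal subrr ip0r.
  rewrite Anorm_le // -[x0](subrK (G y)) addrC.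
  apply: pos_orth_form_min => //.
  by rewrite (pos_selfadjoint ipP A2_ge0) (ip_conj ipP) orth // conjC0.
Qed.
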